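(* Fix any total budget $\mathrm{TB}\in\mathbb N_0$ and let $G$ be a number game. Then $G\ge 0$ if and only if $o(G,0)=\mathrm L$.
   Context: Game forms are defined recursively: $G=\{G^{\mathcal L}\mid G^{\mathcal R}\}$ with finite sets of Left and Right options, and finite birthday. $0=\{\varnothing\mid\varnothing\}$. Fix a total budget $\mathrm{TB}\in\mathbb N_0$. The budget set is $\mathcal B=\{0,\dots,\mathrm{TB},\hat 0,\dots,\widehat{\mathrm{TB}}\}$: state $p$ (resp. $\hat p$) means Left holds $p$ dollars and Right holds $\mathrm{TB}-p$, and Right (resp. Left) holds the tie-breaking marker. Play of $(G,\tilde p)$: at every position (terminal ones included) both players bid simultaneously, Left $\ell\in\{0,\dots,p\}$, Right $r\in\{0,\dots,\mathrm{TB}-p\}$. If Left holds the marker (state $\hat p$): if $\ell>r$ Left moves to $(G^L,\widehat{p-\ell})$, or, including the marker (allowed when $\ell\ge r$), to $(G^L,p-\ell)$; if $\ell=r$ Left wins, the marker passes to Right, play continues at $(G^L,p-\ell)$; if $\ell<r$ Right moves to $(G^R,\widehat{p+r})$. Symmetrically when Right holds the marker (state $p$): if $r>\ell$ Right moves to $(G^R,p+r)$ or, including the marker, to $(G^R,\widehat{p+r})$; if $r=\ell$ Right wins, the marker passes to Left, play continues at $(G^R,\widehat{p+r})$; if $r<\ell$ Left moves to $(G^L,p-\ell)$. A player who wins a bid but has no option loses. $o(G,\tilde p)\in\{\mathrm L,\mathrm R\}$ is the winner under optimal play; $\mathrm L>\mathrm R$. Disjunctive sum $G+H=\{G^{\mathcal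 L}+H,G+H^{\mathcal L}\mid G^{\mathcal R}+H,G+H^{\mathcal R}\}$. $G\ge H$ means $o(G+X,\tilde p)\ge o(H+X,\tilde p)$ for all game forms $X$ and all $\tilde p\in\mathcal B$; $G>H$ means $G\ge H$ and not $H\ge G$; $G<H$ means $H>G$. A game form $G$ is a number (for the fixed $\mathrm{TB}$) if all its options are numbers and $G^L<G<G^R$ for every $G^L\in G^{\mathcal L}$, $G^R\in G^{\mathcal R}$. *)

From Stdlib Require Import List.
From mathcomp Require Import all_boot.
Set Implicit Arguments. Unset Strict Implicit. Unset Printing Implicit Defensive.

(* Game forms: finite lists of Left and Right options (finite birthday is
   automatic for an inductive type). *)
Inductive game : Type := Game : seq game -> seq game -> game.

Definition gzero : game := Game [::] [::].

Fixpoint gsum (G H : game) {struct G} : game :=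
  match G with
  | Game GL GR =>
    let fix aux (H : game) : game :=
      match H with
      | Game HL HR =>
        Game ([seq gsum g H | g <- GL] ++ [seq aux h | h <- HL])
             ([seq gsum g H | g <- GR] ++ [seq aux h | h <- HR])
      end in aux H
  end.

(* Budget state: (p, m) with p = Left's dollars (Right holds TB - p);
   m = true  means the state is  \hat p  (Left holds the tie-break marker),
   m = false means the state is  p       (Right holds the marker).
   [lwins TB G p m] = Left has a winning strategy from (G, state), i.e.
   o(G, state) = L : Left commits to a bid l in {0..p} such that for every
   Right bid r in {0..TB-p} Left wins after the bid is resolved as in the
   rules (the bid winner chooses the option and, when allowed, whether to
   hand over the marker; a bid winner with no option loses). *)
Fixpoint lwins (TB : nat) (G : game) (p : nat) (m : bool) {struct G} : bool :=
  match G with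
  | Game Ls Rs =>
    let Lmove q b := has (fun g => lwins TB g q b) Ls in
    (* Right wins the bid and moves: Left wins iff every Right option loses
       for Right (Right with no option loses) *)
    let Rmove q b := all (fun g => lwins TB g q b) Rs in
    let resolve l r :=
      if m then
        (if r < l then Lmove (p - l) true || Lmove (p - l) false
         else if l == r then Lmove (p - l) false
         else Rmove (p + r) true)
      else
        (if l < r then Rmove (p + r) false && Rmove (p + r) true
         else if l == r then Rmove (p + r) true
         else Lmove (p - l) false) in
    has (fun l => all (fun r => resolve l r) (iota 0 (TB - p).+1)) (iota 0 p.+1)
  end.

(* o(G, p~) = L  iff  lwins TB G p m.  Since L > R,
   o(G+X,p~) >= o(H+X,p~)  iff  (o(H+X,p~) = L -> o(G+X,p~) = L). *)
Definition gge (TB : nat) (G H : game) : Prop :=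
  forall (X : game) (p : nat) (m : bool), p <= TB ->
    lwins TB (gsum H X) p m -> lwins TB (gsum G X) p m.

Definition ggt (TB : nat) (G H : game) : Prop := gge TB G H /\ ~ gge TB H G.

Inductive is_number (TB : nat) : game -> Prop :=
  | is_number_intro (GL GR : seq game) :
      (forall g, List.In g GL -> is_number TB g) ->
      (forall g, List.In g GR -> is_number TB g) ->
      (forall g, List.In g GL -> ggt TB (Game GL GR) g) ->
      (forall g, List.In g GR -> ggt TB g (Game GL GR)) ->
      is_number TB (Game GL GR).

(* Induction on the number K, proving with "Left wins K at 0 implies K >= 0"
   the companion "Left wins K at \hat 0 implies K >= 0 and K absorbs the
   marker", i.e. whenever Left wins X at p she wins K + X at \hat p.
   At 0, Right wins the opening tie 0 = 0 and must hand Left the marker at some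
   K^R, so by induction every K^R is >= 0 and absorbs the marker; Left then wins
   K + X by copying her strategy on X, and a Right move in K is answered by these
   two properties of K^R.  At \hat 0, Left wins the opening tie and reaches a
   K^L won at 0, so K > K^L >= 0.  To absorb the marker Left bids one dollar less
   than in X (now winning ties), arguing by induction on X and on Right's purse
   and using K^R >= K >= 0.  All steps rely on the outcome being monotone in
   Left's budget. *)

From mathcomp Require Import all_boot zify.
Set Implicit Arguments. Unset Strict Implicit.

Definition lopts (G : game) : seq game := let: Game Ls _ := G in Ls.
Definition ropts (G : game) : seq game := let: Game _ Rs := G in Rs.

Lemma gameE G : Game (lopts G) (ropts G) = G.
Proof. by case: G. Qed.

Fixpoint game_ind_opts (P : game -> Prop)
    (IH : forall G, (forall g, List.In g (lopts G) -> P g) ->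
          (forall g, List.In g (ropts G) -> P g) -> P G)
    (G : game) {struct G} : P G :=
  match G with
  | Game Ls Rs =>
    let fix all_in (s : seq game) : forall g, List.In g s -> P g :=
      match s return forall g, List.In g s -> P g with
      | [::] => fun g gs => False_ind (P g) gs
      | h :: t => fun g gs =>
          match gs with
          | or_introl e => eq_rect h P (game_ind_opts IH h) g e
          | or_intror gt => all_in t g gt
          end
      end in
    IH (Game Ls Rs) (all_in Ls) (all_in Rs)
  end.

Lemma gsumE K X :
  gsum K X =
  Game ([seq gsum k X | k <- lopts K] ++ [seq gsum K x | x <- lopts X])
       ([seq gsum k X | k <- ropts K] ++ [seq gsum K x | x <- ropts X]).
Proof. by case: K; case: X. Qed.

Lemma map_id_In (T : Type) (f : T -> T) (s : seq T) :
  (forall x, List.In x s -> f x = x) -> map f s = s.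
Proof. by move=> fid; exact: etrans (List.map_ext_in f id s fid) (List.map_id s). Qed.

Lemma gsum0l X : gsum gzero X = X.
Proof.
elim/game_ind_opts: X => X IHL IHR.
by rewrite gsumE /= !map_id_In // gameE.
Qed.

Lemma gsum0r G : gsum G gzero = G.
Proof.
elim/game_ind_opts: G => G IHL IHR.
by rewrite gsumE /= !cats0 !map_id_In // gameE.
Qed.

Lemma gge_trans TB A B C : gge TB A B -> gge TB B C -> gge TB A C.
Proof. by move=> geAB geBC X p m hp W; apply: geAB => //; apply: geBC. Qed.

Section Bidding.

Variable TB : nat.

Definition lmove G q b := has (fun g => lwins TB g q b) (lopts G).
Definition rmove G q b := all (fun g => lwins TB g q b) (ropts G).

Definition resolve G p (m : bool) l r : bool :=
  if m then
    (if r < l then lmove G (p - l) true || lmove G (p - l) false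
     else if l == r then lmove G (p - l) false
     else rmove G (p + r) true)
  else
    (if l < r then rmove G (p + r) false && rmove G (p + r) true
     else if l == r then rmove G (p + r) true
     else lmove G (p - l) false).

Lemma lmoveP G q b :
  lmove G q b <-> exists g, List.In g (lopts G) /\ lwins TB g q b.
Proof. exact: List.existsb_exists. Qed.

Lemma rmoveP G q b :
  rmove G q b <-> forall g, List.In g (ropts G) -> lwins TB g q b.
Proof. exact: List.forallb_forall. Qed.

Lemma lwinsP G p m : lwins TB G p m <->
  exists2 l, l <= p & forall r, r <= TB - p -> resolve G p m l r.
Proof.
have -> : lwins TB G p m = has (fun l => all (fun r => resolve G p m l r)
                              (iota 0 (TB - p).+1)) (iota 0 p.+1) by case: G.
split=> [/hasP[l] | [l hl W]].
- rewrite mem_iota ltnS => /andP[_ hl] /allP W; exists l => // r hr.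
  by apply: W; rewrite mem_iota ltnS hr.
- apply/hasP; exists l; first by rewrite mem_iota ltnS hl.
  by apply/allP => r; rewrite mem_iota ltnS => /andP[_ /W].
Qed.

Lemma resolveT_left G p l r : r < l ->
  resolve G p true l r = lmove G (p - l) true || lmove G (p - l) false.
Proof. by rewrite /resolve => ->. Qed.

Lemma resolveT_tie G p l : resolve G p true l l = lmove G (p - l) false.
Proof. by rewrite /resolve ltnn eqxx. Qed.

Lemma resolveT_right G p l r : l < r -> resolve G p true l r = rmove G (p + r) true.
Proof. by move=> hlr; rewrite /resolve ltnNge (ltnW hlr) ltn_eqF. Qed.

Lemma resolveF_right G p l r : l < r ->
  resolve G p false l r = rmove G (p + r) false && rmove G (p + r) true.
Proof. by rewrite /resolve => ->. Qed.

Lemma resolveF_tie G p l : resolve G p false l l = rmove G (p + l) true.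
Proof. by rewrite /resolve ltnn eqxx. Qed.

Lemma resolveF_left G p l r : r < l -> resolve G p false l r = lmove G (p - l) false.
Proof. by move=> hrl; rewrite /resolve ltnNge (ltnW hrl) gtn_eqF. Qed.

Lemma lwins_ropts_nil G p : ropts G = [::] -> lwins TB G p false.
Proof.
move=> noR; apply/lwinsP; exists 0 => // -[|r] _.
- by rewrite resolveF_tie /rmove noR.
- by rewrite resolveF_right // /rmove noR.
Qed.

(* The marker alone is no advantage (Left loses [gzero] holding it), so only
   an extra dollar is compared. *)
Definition budget_monotone G := forall q, q < TB ->
  (lwins TB G q false -> lwins TB G q.+1 false) /\
  (lwins TB G q true -> forall b, lwins TB G q.+1 b).

Section BudgetStep.

Variable G : game.
Hypothesis monoL : forall g, List.In g (lopts G) -> budget_monotone g.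
Hypothesis monoR : forall g, List.In g (ropts G) -> budget_monotone g.

Lemma lmove_succF s : s < TB -> lmove G s false -> lmove G s.+1 false.
Proof.
move=> hs /lmoveP[g [gi Wg]]; apply/lmoveP; exists g.
by split; last exact: (proj1 (monoL gi hs)).
Qed.

Lemma lmove_succT s b : s < TB -> lmove G s true -> lmove G s.+1 b.
Proof.
move=> hs /lmoveP[g [gi Wg]]; apply/lmoveP; exists g.
by split; last exact: (proj2 (monoL gi hs)).
Qed.

Lemma rmove_succF s : s < TB -> rmove G s false -> rmove G s.+1 false.
Proof.
by move=> hs /rmoveP W; apply/rmoveP => g gi; exact: (proj1 (monoR gi hs) (W g gi)).
Qed.

Lemma rmove_succT s b : s < TB -> rmove G s true -> rmove G s.+1 b.
Proof.
by move=> hs /rmoveP W; apply/rmoveP => g gi; exact: (proj2 (monoR gi hs) (W g gi)).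
Qed.

Lemma lwinsF_succ q : q < TB -> lwins TB G q false -> lwins TB G q.+1 false.
Proof.
move=> hq /lwinsP[l hl W]; apply/lwinsP; exists l => [|r hr]; first lia.
have {W} := W r (ltac:(lia)); case: (ltngtP l r) => [hlr|hrl|<-] in hr *.
- rewrite !resolveF_right // addSn => /andP[WF WT].
  by apply/andP; split; [apply: rmove_succF | apply: rmove_succT]; lia.
- by rewrite !resolveF_left // subSn //; apply: lmove_succF; lia.
- by rewrite !resolveF_tie addSn; apply: rmove_succT; lia.
Qed.

Lemma lwinsT_succ q : q < TB -> lwins TB G q true -> lwins TB G q.+1 true.
Proof.
move=> hq /lwinsP[l hl W]; apply/lwinsP; exists l => [|r hr]; first lia.
have {W} := W r (ltac:(lia)); case: (ltngtP l r) => [hlr|hrl|<-] in hr *.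
- by rewrite !resolveT_right // addSn; apply: rmove_succT; lia.
- rewrite !resolveT_left // subSn // => /orP[WT | WF]; apply/orP.
  + by left; apply: lmove_succT; lia.
  + by right; apply: lmove_succF; lia.
- by rewrite !resolveT_tie subSn //; apply: lmove_succF; lia.
Qed.

(* Trading the marker for a dollar: Left raises her bid by one, which wins
   exactly the ties she won before, unless her bid already beat Right's purse. *)
Lemma lwinsTF_succ q : q < TB -> lwins TB G q true -> lwins TB G q.+1 false.
Proof.
move=> hq /lwinsP[l hl W]; apply/lwinsP.
have [hlp | hpl] := leqP l (TB - q); last first.
  have := W 0 (leq0n _); rewrite resolveT_left; last lia.
  move=> W0; exists l => [|r hr]; first lia.
  rewrite resolveF_left; last lia.
  rewrite subSn //; case/orP: W0 => [WT | WF].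
  + by apply: lmove_succT; lia.
  + by apply: lmove_succF; lia.
exists l.+1 => // r hr; case: (ltngtP l.+1 r) => [hlr|hrl|<-] in hr *.
- have := W r (ltac:(lia)); rewrite resolveT_right; last lia.
  by rewrite resolveF_right // addSn => WT; apply/andP; split; apply: rmove_succT; lia.
- by rewrite resolveF_left // subSS; move: (W l hlp); rewrite resolveT_tie.
- have := W l.+1 (ltac:(lia)); rewrite resolveT_right //.
  by rewrite resolveF_tie addSn => WT; apply: rmove_succT; lia.
Qed.

End BudgetStep.

Lemma budget_monotoneP G : budget_monotone G.
Proof.
elim/game_ind_opts: G => G monoL monoR q hq; split; first exact: lwinsF_succ.
by move=> W [|]; [exact: lwinsT_succ | exact: lwinsTF_succ].
Qed.

Lemma lwinsF_mono G p q : p <= q -> q <= TB -> lwins TB G p false -> lwins TB G q false.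
Proof.
elim: q => [|q IH]; first by rewrite leqn0 => /eqP<-.
rewrite leq_eqVlt ltnS => /orP[/eqP<- // | hpq hq W].
by apply: (proj1 (budget_monotoneP G hq)); apply: IH => //; exact: ltnW.
Qed.

Lemma lwinsT_mono G p q b : p < q -> q <= TB -> lwins TB G p true -> lwins TB G q b.
Proof.
elim: q b => [//|q IH] b; rewrite ltnS leq_eqVlt => /orP[/eqP<- hq | hpq hq] W.
- exact: (proj2 (budget_monotoneP G hq)).
- by apply: (proj2 (budget_monotoneP G hq)); apply: IH => //; exact: ltnW.
Qed.

Lemma lmove_sumK K X k q b : List.In k (lopts K) ->
  lwins TB (gsum k X) q b -> lmove (gsum K X) q b.
Proof.
move=> ki W; apply/lmoveP; exists (gsum k X); split=> //.
rewrite [gsum K X]gsumE /=; apply/List.in_app_iff; left.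
by apply/List.in_map_iff; exists k.
Qed.

Lemma lmove_sumX K X x q b : List.In x (lopts X) ->
  lwins TB (gsum K x) q b -> lmove (gsum K X) q b.
Proof.
move=> xi W; apply/lmoveP; exists (gsum K x); split=> //.
rewrite [gsum K X]gsumE /=; apply/List.in_app_iff; right.
by apply/List.in_map_iff; exists x.
Qed.

Lemma rmove_sum K X q b :
  (forall k, List.In k (ropts K) -> lwins TB (gsum k X) q b) ->
  (forall x, List.In x (ropts X) -> lwins TB (gsum K x) q b) ->
  rmove (gsum K X) q b.
Proof.
move=> WK WX; apply/rmoveP => g; rewrite [gsum K X]gsumE /=.
by case/List.in_app_iff => /List.in_map_iff[y [<- yi]]; [exact: WK | exact: WX].
Qed.

Lemma gge0P K : gge TB K gzero <->
  forall X p m, p <= TB -> lwins TB X p m -> lwins TB (gsum K X) p m.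
Proof. by split=> geK X p m hp; have := geK X p m hp; rewrite gsum0l. Qed.

(* Left answers every bid in [K + X] as she would in [X] alone. *)
Lemma lwins_sum_copy K X p (m : bool) : p <= TB ->
  (forall x, List.In x (lopts X) -> forall q b, q <= TB ->
     lwins TB x q b -> lwins TB (gsum K x) q b) ->
  (forall x, List.In x (ropts X) -> forall q b, q <= TB ->
     lwins TB x q b -> lwins TB (gsum K x) q b) ->
  (forall k, List.In k (ropts K) -> forall q b, p <= q <= TB -> (m -> p < q) ->
     lwins TB (gsum k X) q b) ->
  lwins TB X p m -> lwins TB (gsum K X) p m.
Proof.
move=> hp WL WR WK /lwinsP[l hl W]; apply/lwinsP; exists l => // r hr.
have {W} := W r hr; have hpr : p + r <= TB by lia.
have WKr b : 0 < r \/ ~~ m ->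
    forall k, List.In k (ropts K) -> lwins TB (gsum k X) (p + r) b.
  by move=> hrm k ki; apply: WK => //; [lia | case: m hrm => // -[]; lia].
case: m WK WKr => WK WKr; case: (ltngtP l r) => [hlr|hrl|<-] in hr hpr WKr *.
- rewrite !resolveT_right // => /rmoveP WX.
  by apply: rmove_sum => [|x xi]; [apply: WKr; lia | apply: WR => //; exact: WX].
- rewrite !resolveT_left // => /orP[] /lmoveP[x [xi Wx]]; apply/orP;
    [left | right]; apply: (lmove_sumX xi); apply: WL => //; lia.
- rewrite !resolveT_tie => /lmoveP[x [xi Wx]].
  by apply: (lmove_sumX xi); apply: WL => //; lia.
- rewrite !resolveF_right // => /andP[/rmoveP WXF /rmoveP WXT].
  apply/andP; split; apply: rmove_sum => [|x xi]; try by apply: WKr; lia.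
  + by apply: WR => //; exact: WXF.
  + by apply: WR => //; exact: WXT.
- rewrite !resolveF_left // => /lmoveP[x [xi Wx]].
  by apply: (lmove_sumX xi); apply: WL => //; lia.
- rewrite !resolveF_tie => /rmoveP WX.
  by apply: rmove_sum => [|x xi]; [apply: WKr; right | apply: WR => //; exact: WX].
Qed.

Definition absorbs_marker K := forall X q, q <= TB ->
  lwins TB X q false -> lwins TB (gsum K X) q true.

Lemma gge0_of_ropts K :
  (forall k, List.In k (ropts K) -> gge TB k gzero /\ absorbs_marker k) ->
  gge TB K gzero.
Proof.
move=> posR; apply/gge0P => X; elim/game_ind_opts: X => X IHL IHR p m hp W.
apply: lwins_sum_copy (W) => // k ki q b /andP[hpq hq] hm.
have WXq : lwins TB X q false.
  by case: m hm W => [/(_ isT) hlt|_]; [exact: lwinsT_mono | exact: lwinsF_mono].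
by case: (posR k ki) => /gge0P geK absK; case: b; [exact: absK | exact: geK].
Qed.

Section MarkerAbsorption.

Variables K kL : game.
Hypothesis K_ge0 : gge TB K gzero.
Hypothesis ropts_ge : forall k, List.In k (ropts K) -> gge TB k K.
Hypothesis kL_in : List.In kL (lopts K).
Hypothesis kL_ge0 : gge TB kL gzero.

(* Holding the marker, Left bids one dollar less than her marker-free
   strategy in [X]: the ties she now wins replace the bids she won by one. *)
Lemma absorbs_marker_step X p : p <= TB ->
  (forall x, List.In x (lopts X) -> forall q, q <= TB ->
     lwins TB x q false -> lwins TB (gsum K x) q true) ->
  (forall x, List.In x (ropts X) -> forall q, q <= TB ->
     lwins TB x q false -> lwins TB (gsum K x) q true) ->
  (forall q, p < q <= TB -> lwins TB X q false -> lwins TB (gsum K X) q true) ->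
  lwins TB X p false -> lwins TB (gsum K X) p true.
Proof.
move=> hp AL AR Aup WX; move: (WX) => /lwinsP[l hl W]; apply/lwinsP.
have WK r k : 0 < r <= TB - p -> List.In k (ropts K) -> lwins TB (gsum k X) (p + r) true.
  move=> /andP[r0 hr] ki; apply: (ropts_ge ki); first lia.
  by apply: Aup; [lia | apply: lwinsF_mono WX; lia].
case: l hl W => [|l] hl W.
  exists 0 => // -[_|r hr].
    rewrite resolveT_tie subn0; apply: (lmove_sumK kL_in).
    exact: (proj1 (gge0P kL) kL_ge0 X p false hp WX).
  rewrite resolveT_right //; apply: rmove_sum => [k|x xi]; first by apply: WK; lia.
  have := W r.+1 hr; rewrite resolveF_right // => /andP[/rmoveP WXR _].
  by apply: AR => //; [lia | exact: WXR].
exists l => [|r hr]; first lia.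
case: (ltngtP l r) => [hlr|hrl|<-] in hr *.
- rewrite resolveT_right //; apply: rmove_sum => [k|x xi]; first by apply: WK; lia.
  have [hlr'|hrl'] := ltnP l.+1 r.
    have := W r hr; rewrite resolveF_right // => /andP[/rmoveP WXR _].
    by apply: AR => //; [lia | exact: WXR].
  have er : r = l.+1 by lia.
  subst r.
  have := W l.+1 hr; rewrite resolveF_tie => /rmoveP WXR.
  by apply: (proj1 (gge0P K) K_ge0); [lia | exact: WXR].
- rewrite resolveT_left //; apply/orP; left.
  have := W r hr; rewrite resolveF_left; last lia.
  move=> /lmoveP[x [xi Wx]]; apply: (lmove_sumX xi).
  by apply: AL => //; [lia | apply: lwinsF_mono Wx; lia].
- rewrite resolveT_tie; have := W l hr; rewrite resolveF_left //.
  move=> /lmoveP[x [xi Wx]]; apply: (lmove_sumX xi).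
  by apply: (proj1 (gge0P K) K_ge0); [lia | apply: lwinsF_mono Wx; lia].
Qed.

Lemma absorbs_markerP : absorbs_marker K.
Proof.
move=> X; elim/game_ind_opts: X => X AL AR p.
have [n] := ubnP (TB - p); elim: n p => // n IHn p hn hp.
by apply: absorbs_marker_step => // q /andP[hpq hq]; apply: IHn => //; lia.
Qed.

End MarkerAbsorption.

Lemma lwins0F_ropts K k : lwins TB K 0 false -> List.In k (ropts K) -> lwins TB k 0 true.
Proof.
case/lwinsP=> l; rewrite leqn0 => /eqP-> /(_ 0 (leq0n _)).
by rewrite resolveF_tie => /rmoveP; apply.
Qed.

Lemma lwins0T_lopts K : lwins TB K 0 true ->
  exists k, List.In k (lopts K) /\ lwins TB k 0 false.
Proof.
case/lwinsP=> l; rewrite leqn0 => /eqP-> /(_ 0 (leq0n _)).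
by rewrite resolveT_tie => /lmoveP.
Qed.

Lemma number_ge0 K : is_number TB K ->
  (lwins TB K 0 false -> gge TB K gzero) /\
  (lwins TB K 0 true -> gge TB K gzero /\ absorbs_marker K).
Proof.
elim=> KL KR _ IHL _ IHR gtL ltR; split=> [W | U].
  apply: gge0_of_ropts => k ki.
  exact: (proj2 (IHR k ki)) (lwins0F_ropts W ki).
have [k [ki Wk]] := lwins0T_lopts U.
have k_ge0 := proj1 (IHL k ki) Wk.
have K_ge0 := gge_trans (proj1 (gtL k ki)) k_ge0.
split=> //; apply: (absorbs_markerP K_ge0 _ ki k_ge0) => g gi.
exact: proj1 (ltR g gi).
Qed.

End Bidding.

Theorem mainTheorem2 (TB : nat) (G : game) :
  is_number TB G -> (gge TB G gzero <-> lwins TB G 0 false).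
Proof.
move=> numG; split; last exact: (proj1 (number_ge0 numG)).
move=> /(_ gzero 0 false (leq0n _)); rewrite !gsum0r; apply.
exact: lwins_ropts_nil.
Qed.
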